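(* Let $(\mathcal X,\mathcal B,\pi)$ be a measure space with $\pi$ $\sigma$-finite, $r$ measurable, $\{\varepsilon(x)\}$ an arbitrary real-valued random field, $\alpha\in(0,1)$, and $p_{\rm ref}\in\mathcal P_\pi$. Assume $0<Q_*<\infty$ with $Q\le Q_*$ everywhere, and $$\alpha>\Bigl(\int\frac{Q_*}{Q_*-Q(x)}\,p_{\rm ref}(x)\,\pi(dx)\Bigr)^{-1}.$$ Then the operator $L_N$ has a unique fixed point $w_*$ in $\mathcal P_{\mathbb P_{\rm ref}}$, and the constant $c_*:=\langle w_*,Q\rangle_{\rm ref}$ lies in $\bigl((1-\alpha)Q_*,\,Q_*\bigr]$.
   Context: $\mathcal P_\pi$ = probability densities w.r.t. $\pi$. $Q(x):=e^{r(x)}\mathbb E[e^{\varepsilon(x)}]$, $Q_*:=\operatorname*{ess\,sup}_\pi Q$; in the displayed condition the integrand is $+\infty$ where $Q=Q_*$ and the reciprocal of $+\infty$ is $0$. $\mathbb P_{\rm ref}(dx)=p_{\rm ref}(x)\pi(dx)$; $\mathcal P_{\mathbb P_{\rm ref}}$ = probability densities w.r.t. $\mathbb P_{\rm ref}$; $\langle f,g\rangle_{\rm ref}=\int fg\,d\mathbb P_{\rm ref}$. On the cone $\mathcal K=\{f\in L^1(\mathbb P_{\rm ref}):f>0\ \mathbb P_{\rm ref}\text{-a.s.}\}$, $L[f]=\alpha\langle f,Q\rangle_{\rm ref}+(1-\alpha)fQ$ and $L_N[f]=L[f]/\langle f,Q\rangle_{\rm ref}$. *)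

From HB Require Import structures.
From mathcomp Require Import all_boot all_order all_algebra.
From mathcomp Require Import all_classical all_reals all_analysis measurable_realfun ess_sup_inf.
Set Implicit Arguments. Unset Strict Implicit. Unset Printing Implicit Defensive.
Import Order.TTheory GRing.Theory Num.Theory.
Import numFieldNormedType.Exports.
Local Open Scope classical_set_scope.
Local Open Scope ring_scope.

Section defs.
Context {d : measure_display} {X : measurableType d} {R : realType}.
Variable pi : {measure set X -> \bar R}.

Definition is_density (p : X -> R) : Prop :=
  [/\ measurable_fun setT p, (forall x, 0 <= p x)
    & (\int[pi]_x (p x)%:E = 1)%E].

Variable p_ref : X -> R.

(* P_ref(dx) = p_ref(x) pi(dx).  Integral against P_ref: *)
Definition int_ref (f : X -> R) : \bar R := (\int[pi]_x (f x * p_ref x)%:E)%E.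

Definition dot_ref (f g : X -> R) : \bar R := int_ref (fun x => f x * g x).

(* "P_ref-a.s. P": the set where P fails has P_ref-measure 0, i.e.
   pi-a.e. on {p_ref > 0}. *)
Definition ae_ref (P : X -> Prop) : Prop :=
  {ae pi, forall x, 0 < p_ref x -> P x}.

Definition is_ref_density (w : X -> R) : Prop :=
  [/\ measurable_fun setT w, (forall x, 0 <= w x) & int_ref w = 1%E].

Definition in_cone (f : X -> R) : Prop :=
  [/\ measurable_fun setT f,
      (int_ref (fun x => (`|f x|)%R) < +oo)%E
    & ae_ref (fun x => 0 < f x)].

Variables (alpha : R) (Q : X -> R).

Definition Lop (f : X -> R) : X -> R :=
  fun x => alpha * fine (dot_ref f Q) + (1 - alpha) * f x * Q x.

Definition LNop (f : X -> R) : X -> R :=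
  fun x => Lop f x / fine (dot_ref f Q).

End defs.

Definition Qfun {d : measure_display} {X : measurableType d} {R : realType}
  {d' : measure_display} {Omega : measurableType d'}
  (P : probability Omega R) (r : X -> R) (eps : X -> Omega -> R) : X -> \bar R :=
  fun x => ((expR (r x))%:E * \int[P]_w (expR (eps x w))%:E)%E.

From HB Require Import structures.
From mathcomp Require Import all_boot all_order all_algebra.
From mathcomp Require Import all_classical all_reals all_analysis measurable_realfun ess_sup_inf.
From mathcomp Require Import ring lra.
Set Implicit Arguments.
Unset Strict Implicit.
Unset Printing Implicit Defensive.
Import Order.TTheory GRing.Theory Num.Theory.
Import numFieldNormedType.Exports.
Local Open Scope classical_set_scope.
Local Open Scope ring_scope.

(* A fixed point w of L_N with <w, Q>_ref = c satisfies w (c - (1 - alpha) Q) =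
   alpha c pointwise, so every fixed point in the cone is P_ref-a.s. equal to
   w_c = alpha c / (c - (1 - alpha) Q) with c = <w, Q>_ref.  Conversely, for
   c > (1 - alpha) Q_*, w_c is a fixed point as soon as its P_ref-mass is 1:
   integrating (1 - alpha) w_c Q = c (w_c - alpha) then gives <w_c, Q>_ref = c.
   The mass of w_c is continuous and nonincreasing in c, at most 1 at c = Q_*, and
   tends by monotone convergence to alpha int Q_*/(Q_* - Q) dP_ref > 1 as c
   decreases to (1 - alpha) Q_*, so the intermediate value theorem yields a
   normalizing c.  Uniqueness: if the constant c' of another fixed point were < c
   (resp. > c), then w_c' >= w_c (resp. <=), hence c' = <w_c', Q>_ref >=
   <w_c, Q>_ref = c (resp. <=), a contradiction. *)

Section fixed_point_profile.
Context {R : realType}.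
Variable a : R.
Hypothesis a01 : 0 < a < 1.

Definition fixpt (c t : R) : R := a * c / (c - (1 - a) * t).

Let a_gt0 : 0 < a. Proof. by case/andP: a01. Qed.
Let ca_gt0 : 0 < 1 - a. Proof. by case/andP: a01; rewrite subr_gt0. Qed.

Lemma fixpt_gt0 c t : 0 <= t -> (1 - a) * t < c -> 0 < fixpt c t.
Proof.
move=> t0 tc; have c0 : 0 < c by apply: le_lt_trans tc; rewrite mulr_ge0 // ltW.
by rewrite divr_gt0 ?mulr_gt0 // subr_gt0.
Qed.

Lemma fixpt_ge0 c t : 0 <= t -> (1 - a) * t < c -> 0 <= fixpt c t.
Proof. by move=> t0 tc; rewrite ltW // fixpt_gt0. Qed.

Lemma fixpt_le c t t' : 0 <= t <= t' -> (1 - a) * t' < c -> fixpt c t <= fixpt c t'.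
Proof.
move=> /andP[t0 tt'] tc.
have btt : (1 - a) * t <= (1 - a) * t' by rewrite ler_wpM2l // ltW.
have bt : 0 <= (1 - a) * t by rewrite mulr_ge0 // ltW.
have c0 : 0 < c by lra.
rewrite ler_pM2l ?mulr_gt0 // lef_pV2 ?posrE ?subr_gt0 //; lra.
Qed.

Lemma fixpt_antitone c c' t : 0 <= t -> (1 - a) * t < c -> c <= c' ->
  fixpt c' t <= fixpt c t.
Proof.
move=> t0 tc cc'; have tc' := lt_le_trans tc cc'.
have bt : 0 <= (1 - a) * t by rewrite mulr_ge0 // ltW.
rewrite /fixpt ler_pdivrMr ?subr_gt0 // mulrAC ler_pdivlMr ?subr_gt0 //.
rewrite -!mulrA ler_pM2l //; nra.
Qed.

Lemma fixpt_fixed c t : c != 0 -> c - (1 - a) * t != 0 ->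
  (a * c + (1 - a) * fixpt c t * t) / c = fixpt c t.
Proof. by move=> c0 d0; rewrite /fixpt; field; rewrite c0 d0. Qed.

Lemma eq_fixpt c t v : 0 < c -> 0 < v -> (a * c + (1 - a) * v * t) / c = v ->
  (1 - a) * t < c /\ v = fixpt c t.
Proof.
move=> c0 v0 /(congr1 ( *%R^~ c)); rewrite divfK ?gt_eqF // => e.
have ev : v * (c - (1 - a) * t) = a * c by rewrite mulrBr -e; ring.
have d0 : 0 < c - (1 - a) * t.
  by rewrite -(pmulr_rgt0 _ v0) ev mulr_gt0.
by split; [rewrite -subr_gt0 | rewrite /fixpt -ev mulfK ?gt_eqF].
Qed.

Lemma fixpt_lipschitz c0 c c' t q : 0 <= t <= q -> (1 - a) * q < c0 ->
  c0 <= c -> c0 <= c' ->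
  `|fixpt c t - fixpt c' t| <= a * (1 - a) * q / (c0 - (1 - a) * q) ^+ 2 * `|c - c'|.
Proof.
move=> /andP[t0 tq] qc0 c0c c0c'.
have bq : (1 - a) * t <= (1 - a) * q by rewrite ler_wpM2l // ltW.
have e0 : 0 < c0 - (1 - a) * q by rewrite subr_gt0.
have d : 0 < c - (1 - a) * t by lra.
have d' : 0 < c' - (1 - a) * t by lra.
have -> : fixpt c t - fixpt c' t =
    a * (1 - a) * t * (c' - c) / ((c - (1 - a) * t) * (c' - (1 - a) * t)).
  by rewrite /fixpt; field; rewrite !gt_eqF.
have abt : 0 <= a * (1 - a) * t by rewrite !mulr_ge0 // ltW.
rewrite normrM normfV normrM distrC (ger0_norm abt).
rewrite (gtr0_norm (mulr_gt0 d d')) mulrAC ler_wpM2r //.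
have aa : 0 <= a * (1 - a) by rewrite mulr_ge0 // ltW.
apply: ler_pM => //; first by rewrite invr_ge0 ltW // mulr_gt0.
  by rewrite ler_wpM2l.
rewrite lef_pV2 ?posrE ?exprn_gt0 ?mulr_gt0 // expr2.
by apply: ler_pM; lra.
Qed.

Lemma fixpt_cvg (u : R^nat) c t : u @ \oo --> c -> c - (1 - a) * t != 0 ->
  (fun n => fixpt (u n) t) @ \oo --> fixpt c t.
Proof.
move=> uc d0; apply: cvgM; first exact: cvgMr.
by apply: cvgV => //; apply: cvgB => //; exact: cvg_cst.
Qed.

(* Decreases to [(1 - a) q], the infimum of the admissible normalizing constants. *)
Definition cseq (q : R) (n : nat) : R := (1 - a) * q + a * q / n.+1%:R.

Lemma cseq_gt q n : 0 < q -> (1 - a) * q < cseq q n.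
Proof. by move=> q0; rewrite /cseq ltrDl divr_gt0 ?mulr_gt0. Qed.

Lemma cseq_le q n : 0 <= q -> cseq q n <= q.
Proof.
move=> q0; have aq : 0 <= a * q by rewrite mulr_ge0 // ltW.
have : a * q / n.+1%:R <= a * q by rewrite ler_pdivrMr ?ler_peMr ?ler1n.
by rewrite /cseq; set z := _ / _; lra.
Qed.

Lemma cseq_antitone q : 0 <= q -> {homo cseq q : m n / (m <= n)%N >-> n <= m}.
Proof.
move=> q0 m n mn; have aq : 0 <= a * q by rewrite mulr_ge0 // ltW.
by rewrite /cseq lerD2l ler_wpM2l // lef_pV2 ?posrE ?ltr0Sn // ler_nat.
Qed.

Lemma cseq_cvg q : cseq q @ \oo --> (1 - a) * q.
Proof.
rewrite -[X in _ --> X]addr0 -(mulr0 (a * q)).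
by apply: cvgD; [exact: cvg_cst | apply: cvgMr; exact: cvg_harmonic].
Qed.

Lemma fixpt_cseq_cvgy q : 0 < q -> (fun n => fixpt (cseq q n) q) @ \oo --> +oo.
Proof.
move=> q0; apply/cvgryPge => A.
have /cvgryPge /(_ (A / (1 - a))) := @cvgr_idn R.
apply: filterS => n; rewrite ler_pdivrMr // => An.
have -> : fixpt (cseq q n) q = cseq q n * n.+1%:R / q.
  rewrite /fixpt /cseq; field.
  have -> : (1 - a) * q * (1 + n%:R) + a * q + - ((1 - a) * q) * (1 + n%:R) = a * q.
    by ring.
  by rewrite addrC natr1 pnatr_eq0 !gt_eqF ?mulr_gt0.
have := cseq_gt n q0; rewrite ler_pdivlMr // -natr1.
set m := n%:R in An *; set c := cseq q n => qc.
have m0 : 0 <= m by rewrite /m.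
have bq : 0 <= (1 - a) * q by rewrite mulr_ge0 ?ltW.
nra.
Qed.

Lemma fixpt_cseq_cvge q s u : 0 < q ->
  0 <= s <= q -> 0 <= u ->
  ((fixpt (cseq q n) s * u)%:E @[n --> \oo] -->
   a%:E * ((if s == q then +oo else (q / (q - s))%:E) * u%:E))%E.
Proof.
move=> q0 /andP[s0 sq] u0.
have [->|u_neq0] := eqVneq u 0.
  by under eq_fun do rewrite mulr0; rewrite !mule0; exact: cvg_cst.
have u_gt0 : 0 < u by rewrite lt_neqAle eq_sym u_neq0.
have [->|s_neq_q] := eqVneq s q.
  rewrite mulyr gtr0_sg // mul1e mulry gtr0_sg // mul1e.
  apply/cvgeryP/cvgryPge => A.
  have /cvgryPge /(_ (A / u)) := fixpt_cseq_cvgy q0.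
  by apply: filterS => n; rewrite ler_pdivrMr.
have qs : q - s != 0 by rewrite subr_eq0 eq_sym.
have den : (1 - a) * q - (1 - a) * s != 0.
  by rewrite -mulrBr mulf_neq0 // gt_eqF // subr_gt0.
rewrite -!EFinM mulrA.
have -> : a * (q / (q - s)) = fixpt ((1 - a) * q) s.
  by rewrite /fixpt -mulrBr; field; rewrite qs gt_eqF // subr_gt0.
apply: cvg_EFin; first exact: nearW.
by apply: cvgMl; apply: fixpt_cvg => //; exact: cseq_cvg.
Qed.

End fixed_point_profile.


Lemma measurable_funV_gt0 {d} {X : measurableType d} {R : realType} (f : X -> R) :
  measurable_fun setT f -> (forall x, 0 < f x) -> measurable_fun setT (fun x => (f x)^-1).
Proof.
move=> mf f0; change (measurable_fun setT (GRing.inv \o f)).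
have mO : measurable (`]0, +oo[%classic : set R) by [].
apply: (measurable_comp mO) => //.
- by move=> _ [x _ <-]; rewrite /= in_itv /= andbT f0.
- apply: open_continuous_measurable_fun; first exact: interval_open.
  by move=> x; rewrite inE /= in_itv /= andbT => x0; apply: inv_continuous; rewrite gt_eqF.
Qed.

Lemma maxr_lipschitz {R : realDomainType} (c u v : R) :
  `|Num.max u c - Num.max v c| <= `|u - v|.
Proof.
have := ler_norm (u - v); have := ler_norm (v - u); rewrite distrC.
by rewrite ler_norml; case: (leP u c); case: (leP v c) => *; apply/andP; split; lra.
Qed.

Lemma lipschitz_continuous {R : realType} (f : R -> R) (k : R) : 0 <= k ->
  (forall x y, `|f x - f y| <= k * `|x - y|) -> continuous f.
Proof.
move=> k0 fk x; apply/cvgrPdist_lt => e e0.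
have ek : 0 < e / (k + 1) by rewrite divr_gt0 // ltr_wpDl.
near=> y; apply: le_lt_trans (fk x y) _.
have xy : `|x - y| < e / (k + 1) by near: y; exact: (@cvgr_dist_lt _ _ _ _ _ id).
apply: le_lt_trans (ler_wpM2l k0 (ltW xy)) _.
by rewrite mulrA ltr_pdivrMr ?ltr_wpDl //; lra.
Unshelve. all: by end_near.
Qed.

Lemma lt_inve_mule_gt1 {R : realType} (a : R) (I : \bar R) : 0 < a -> (0 <= I)%E ->
  (I^-1 < a%:E)%E -> (1 < a%:E * I)%E.
Proof.
move=> a0; case: I => [s| |] //; last by rewrite mulry gtr0_sg // mul1e ltry.
rewrite lee_fin inver => s0; case: eqP => [_|s_neq0]; first by rewrite ltNge leey.
have s_gt0 : 0 < s by rewrite lt_neqAle eq_sym s0 andbT; apply/eqP.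
by rewrite !lte_fin -(ltr_pM2r s_gt0) mulVf ?gt_eqF.
Qed.

Section reference_measure.
Context {d} {X : measurableType d} {R : realType} (pi : {measure set X -> \bar R}).
Variable p : X -> R.
Hypothesis p_dens : is_density pi p.

Let mp : measurable_fun setT p. Proof. by case: p_dens. Qed.
Let p_ge0 x : 0 <= p x. Proof. by case: p_dens. Qed.
Let p_int1 : (\int[pi]_x (p x)%:E = 1)%E. Proof. by case: p_dens. Qed.

Lemma integrable_density : pi.-integrable setT (EFin \o p).
Proof.
apply/integrableP; split; first exact/measurable_EFinP.
under eq_integral do rewrite /= ger0_norm //.
by rewrite p_int1 ltry.
Qed.

Lemma int_ref_cst k : int_ref pi p (fun=> k) = k%:E.
Proof.
rewrite /int_ref; under eq_integral do rewrite EFinM.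
by rewrite integralZl ?p_int1 ?mule1 //; exact: integrable_density.
Qed.

Lemma integrable_ref_bounded (f : X -> R) M : 0 <= M -> measurable_fun setT f ->
  (forall x, `|f x| <= M) -> pi.-integrable setT (fun x => (f x * p x)%:E).
Proof.
move=> M0 mf fM.
apply: le_integrable (integrableZl measurableT M integrable_density) => //.
- by apply/measurable_EFinP; exact: measurable_funM.
- move=> x _; rewrite /= lee_fin normrM (ger0_norm (p_ge0 x)).
  by rewrite [X in _ <= X]ger0_norm ?mulr_ge0 // ler_wpM2r.
Qed.

Lemma ae_ref_False : ~ ae_ref pi p (fun=> False).
Proof.
rewrite /ae_ref => H.
suff : (\int[pi]_x (p x)%:E = \int[pi]_x (cst 0%E) x)%E.
  by rewrite p_int1 integral0 => /eqP; rewrite onee_eq0.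
apply: ae_eq_integral => //; first exact/measurable_EFinP.
apply: filterS H => x H _; apply/eqP; rewrite /= eqe eq_le p_ge0 andbT.
by rewrite leNgt; apply/negP => /H.
Qed.

Section weight.
Variable t : X -> R.
Hypotheses (mt : measurable_fun setT t) (t_ge0 : forall x, 0 <= t x).

Lemma dot_ref_ge0 (f : X -> R) : (forall x, 0 <= f x) -> (0 <= dot_ref pi p f t)%E.
Proof. by move=> f0; apply: integral_ge0 => x _; rewrite lee_fin !mulr_ge0. Qed.

Lemma le_dot_ref (f g : X -> R) : measurable_fun setT f -> measurable_fun setT g ->
  (forall x, 0 <= f x) -> (forall x, 0 <= g x) ->
  ae_ref pi p (fun x => f x <= g x) -> (dot_ref pi p f t <= dot_ref pi p g t)%E.
Proof.
move=> mf mg f0 g0 fg; apply: ae_ge0_le_integral => //.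
- by move=> x _; rewrite lee_fin !mulr_ge0.
- by apply/measurable_EFinP; do 2 apply: measurable_funM => //.
- by move=> x _; rewrite lee_fin !mulr_ge0.
- by apply/measurable_EFinP; do 2 apply: measurable_funM => //.
move: fg; rewrite /ae_ref; apply: filterS => x fgx _; rewrite lee_fin.
have [->|px] := eqVneq (p x) 0; first by rewrite !mulr0.
have px_gt0 : 0 < p x by rewrite lt_neqAle eq_sym px p_ge0.
by rewrite ler_wpM2r // ler_wpM2r ?fgx.
Qed.

Lemma dot_ref_le_sup (v : X -> R) q : is_ref_density pi p v -> (forall x, t x <= q) ->
  (dot_ref pi p v t <= q%:E)%E.
Proof.
case=> mv v0 v1 tq.
apply: (@le_trans _ _ (\int[pi]_x (q%:E * (v x * p x)%:E))%E).
  apply: ge0_le_integral => //.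
  - by move=> x _; rewrite lee_fin !mulr_ge0.
  - by apply/measurable_EFinP; do 2 apply: measurable_funM => //.
  - by apply: measurable_funeM; apply/measurable_EFinP; apply: measurable_funM.
  - by move=> x _; rewrite -EFinM lee_fin mulrAC [q * _]mulrC ler_wpM2l ?mulr_ge0.
rewrite ge0_integralZl_EFin //.
- by move: v1; rewrite /int_ref => ->; rewrite mule1.
- by move=> x _; rewrite lee_fin mulr_ge0.
- by apply/measurable_EFinP; apply: measurable_funM.
- exact: le_trans (t_ge0 point) (tq point).
Qed.

End weight.
End reference_measure.

Section normalization.
Context {d} {X : measurableType d} {R : realType} (pi : {measure set X -> \bar R}).
Variables (p : X -> R) (a q : R) (t : X -> R).
Hypotheses (p_dens : is_density pi p) (a01 : 0 < a < 1) (q_gt0 : 0 < q)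
  (mt : measurable_fun setT t) (tq : forall x, 0 <= t x <= q).

Let mp : measurable_fun setT p. Proof. by case: p_dens. Qed.
Let p_ge0 x : 0 <= p x. Proof. by case: p_dens. Qed.
Let t_ge0 x : 0 <= t x. Proof. by case/andP: (tq x). Qed.
Let t_le x : t x <= q. Proof. by case/andP: (tq x). Qed.
Let a_gt0 : 0 < a. Proof. by case/andP: a01. Qed.
Let ca_gt0 : 0 < 1 - a. Proof. by case/andP: a01; rewrite subr_gt0. Qed.

Local Notation w c := (fun x => fixpt a c (t x)).
Local Notation mass c := (int_ref pi p (w c)).

Let ratio_ge0 x : (0 <= (if t x == q then +oo else (q / (q - t x))%:E) * (p x)%:E)%E.
Proof.
rewrite mule_ge0 ?lee_fin //; case: ifPn => // _.
by rewrite lee_fin divr_ge0 ?subr_ge0 // ltW.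
Qed.

Let t_lt c x : (1 - a) * q < c -> (1 - a) * t x < c.
Proof. by apply: le_lt_trans; rewrite ler_wpM2l // ltW. Qed.

Lemma measurable_fixpt c : (1 - a) * q < c -> measurable_fun setT (w c).
Proof.
move=> qc; apply: measurable_funM; first exact: measurable_cst.
apply: measurable_funV_gt0 => [|x]; last by rewrite subr_gt0 t_lt.
by apply: measurable_funB; [exact: measurable_cst | exact: measurable_funM].
Qed.

Lemma integrable_fixpt c : (1 - a) * q < c ->
  pi.-integrable setT (fun x => (w c x * p x)%:E).
Proof.
move=> qc; apply: (@integrable_ref_bounded _ _ _ _ _ p_dens _ (fixpt a c q)).
- by rewrite fixpt_ge0 // ltW.
- exact: measurable_fixpt.
- by move=> x; rewrite ger0_norm ?fixpt_ge0 ?t_lt // fixpt_le ?tq.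
Qed.

Lemma int_ref_fixptE c : (1 - a) * q < c -> mass c = (fine (mass c))%:E.
Proof. by move=> qc; rewrite fineK // integrable_fin_num // integrable_fixpt. Qed.

Lemma int_ref_fixpt_lipschitz c0 c c' : (1 - a) * q < c0 -> c0 <= c -> c0 <= c' ->
  `|fine (mass c) - fine (mass c')|
    <= a * (1 - a) * q / (c0 - (1 - a) * q) ^+ 2 * `|c - c'|.
Proof.
move=> qc0 c0c c0c'; have qc := lt_le_trans qc0 c0c; have qc' := lt_le_trans qc0 c0c'.
set K := _ / _ ^+ 2.
have mD : measurable_fun setT (fun x => ((w c x - w c' x) * p x)%:E).
  apply/measurable_EFinP; apply: measurable_funM => //.
  by apply: measurable_funB; exact: measurable_fixpt.
rewrite -lee_fin -abse_EFin EFinB -!int_ref_fixptE // /int_ref.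
rewrite -integralB_EFin ?integrable_fixpt //.
under eq_integral do rewrite -EFinB -mulrBl.
apply: le_trans (le_abse_integral _ measurableT mD) _.
rewrite -(int_ref_cst p_dens) /int_ref; apply: ge0_le_integral => //.
- exact: measurableT_comp.
- by apply/measurable_EFinP; apply: measurable_funM.
- move=> x _; rewrite abse_EFin lee_fin normrM (ger0_norm (p_ge0 x)) ler_wpM2r //.
  exact: fixpt_lipschitz.
Qed.

Lemma int_ref_fixpt_le1 : (mass q <= 1)%E.
Proof.
have qq : (1 - a) * q < q by rewrite gtr_pMl // ltrBlDr ltrDl.
rewrite -(int_ref_cst p_dens 1); apply: ge0_le_integral => //.
- by move=> x _; rewrite lee_fin mulr_ge0 ?fixpt_ge0 ?t_lt.
- by apply/measurable_EFinP; apply: measurable_funM => //; exact: measurable_fixpt.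
- by apply/measurable_EFinP; apply: measurable_funM => //; exact: measurable_cst.
- move=> x _; rewrite lee_fin ler_wpM2r // (le_trans (fixpt_le _ _ qq)) ?tq //.
  by rewrite /fixpt -{2}(mul1r q) -mulrBl subKr divff // mulf_neq0 ?gt_eqF.
Qed.

Lemma int_ref_fixpt_cseq_cvg :
  mass (cseq a q n) @[n --> \oo] -->
  (a%:E * \int[pi]_x ((if t x == q then +oo else (q / (q - t x))%:E) * (p x)%:E))%E.
Proof.
set F := (fun x => (if t x == q then +oo else (q / (q - t x))%:E) * (p x)%:E)%E.
pose g n x := (fixpt a (cseq a q n) (t x) * p x)%:E.
have qc n : (1 - a) * q < cseq a q n := cseq_gt a01 n q_gt0.
have mg n : measurable_fun setT (g n).
  by apply/measurable_EFinP; apply: measurable_funM => //; exact: measurable_fixpt.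
have g_ge0 n x : (0 <= g n x)%E by rewrite lee_fin mulr_ge0 ?fixpt_ge0 ?t_lt.
have nd_g x : nondecreasing_seq (g^~ x).
  move=> m n mn; rewrite lee_fin ler_wpM2r // fixpt_antitone ?t_lt //.
  by apply: (cseq_antitone a01 (ltW q_gt0)); exact: mn.
have g_cvg x := fixpt_cseq_cvge a01 q_gt0 (tq x) (p_ge0 x).
have mF : measurable_fun setT F.
  have -> : F = (fun x => (a^-1)%:E * (a%:E * F x))%E.
    by apply/funext => x; rewrite muleA -EFinM mulVf ?gt_eqF // mul1e.
  by apply: measurable_funeM; exact: emeasurable_fun_cvg mg (fun x _ => g_cvg x).
rewrite -ge0_integralZl ?lee_fin ?ltW //.
have mct := cvg_monotone_convergence measurableT mg (fun n x _ => g_ge0 n x) (fun x _ => nd_g x).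
suff <- : (\int[pi]_x limn (g^~ x) = \int[pi]_x (a%:E * F x))%E by exact: mct.
by apply: eq_integral => x _; exact: cvg_lim (g_cvg x).
Qed.

Lemma exists_int_ref_fixpt_gt1 :
  (1 < a%:E * \int[pi]_x ((if t x == q then +oo else (q / (q - t x))%:E) * (p x)%:E))%E ->
  exists2 c0, (1 - a) * q < c0 <= q & (1 < mass c0)%E.
Proof.
move=> gt1; apply: contrapT => none.
have le1 n : (mass (cseq a q n) <= 1)%E.
  rewrite leNgt; apply/negP => m_gt1; apply: none; exists (cseq a q n) => //.
  by rewrite (cseq_gt a01 n q_gt0) (cseq_le a01 n (ltW q_gt0)).
have := cvge_to_le int_ref_fixpt_cseq_cvg (@nearW _ _ _ _ le1).
by move=> /(_ _ _)/= ; rewrite leNgt gt1.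
Qed.

Lemma exists_int_ref_fixpt_eq1 c0 : (1 - a) * q < c0 -> c0 <= q -> (1 < mass c0)%E ->
  exists2 c, c0 <= c <= q & mass c = 1%E.
Proof.
move=> qc0 c0q gt1.
set K := a * (1 - a) * q / (c0 - (1 - a) * q) ^+ 2.
have K_ge0 : 0 <= K by rewrite divr_ge0 ?sqr_ge0 // !mulr_ge0 // ltW.
pose G c := fine (mass (Num.max c c0)).
have c0_le_max c : c0 <= Num.max c c0 by rewrite le_max lexx orbT.
have G_cont : continuous G.
  apply: (lipschitz_continuous K_ge0) => x y.
  apply: le_trans (int_ref_fixpt_lipschitz qc0 (c0_le_max x) (c0_le_max y)) _.
  by rewrite ler_wpM2l // maxr_lipschitz.
have qq : (1 - a) * q < q by apply: lt_le_trans c0q.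
have Gc0 : 1 <= G c0 by rewrite /G maxxx -lee_fin -int_ref_fixptE // ltW.
have Gq : G q <= 1 by rewrite /G max_l // -lee_fin -int_ref_fixptE ?int_ref_fixpt_le1.
have G1 : Num.min (G c0) (G q) <= 1 <= Num.max (G c0) (G q).
  by rewrite ge_min le_max Gq Gc0 orbT.
have [c cI Gc] := IVT c0q (continuous_subspaceT G_cont) G1.
move: cI; rewrite in_itv /= => /andP[c0c cq]; exists c; first by rewrite c0c.
by rewrite int_ref_fixptE ?(lt_le_trans qc0) // -Gc /G max_l.
Qed.

Lemma dot_ref_fixpt c : (1 - a) * q < c -> mass c = 1%E -> dot_ref pi p (w c) t = c%:E.
Proof.
move=> qc m1.
have wt x : w c x * t x * p x = c / (1 - a) * (w c x * p x - a * p x).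
  have := t_lt x qc; rewrite -subr_gt0 => den.
  by rewrite /fixpt; field; rewrite !gt_eqF.
have ip : pi.-integrable setT (fun x => (a * p x)%:E).
  by under eq_fun do rewrite EFinM; apply: integrableZl => //; exact: integrable_density.
rewrite /dot_ref /int_ref; under eq_integral do rewrite wt EFinM.
rewrite integralZl //; last first.
  by under eq_fun do rewrite EFinB; apply: integrableB => //; exact: integrable_fixpt.
under eq_integral do rewrite EFinB.
rewrite integralB_EFin //; last exact: integrable_fixpt.
rewrite -/(int_ref pi p (w c)) -/(int_ref pi p (fun=> a)) m1 int_ref_cst //.
by rewrite -EFinB -EFinM divfK // gt_eqF.
Qed.

Lemma exists_normalizing_constant :
  ((\int[pi]_x ((if t x == q then +oo else (q / (q - t x))%:E) * (p x)%:E))^-1 < a%:E)%E ->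
  exists2 c, (1 - a) * q < c <= q & mass c = 1%E.
Proof.
move=> /(lt_inve_mule_gt1 a_gt0 (integral_ge0 _ (fun x _ => ratio_ge0 x))).
move=> /exists_int_ref_fixpt_gt1 [c0 /andP[qc0 c0q] /(exists_int_ref_fixpt_eq1 qc0 c0q)].
by case=> c /andP[c0c cq] m1; exists c; rewrite ?cq ?(lt_le_trans qc0).
Qed.

Lemma fixpt_ref_density c : (1 - a) * q < c -> mass c = 1%E ->
  is_ref_density pi p (w c) /\ in_cone pi p (w c).
Proof.
move=> qc m1; have w_gt0 x : 0 < w c x by rewrite fixpt_gt0 ?t_lt.
have mw := measurable_fixpt qc.
split; first by split => // x; exact: ltW.
split => //.
- by under [int_ref _ _ _]eq_integral do rewrite ger0_norm ?ltW //; rewrite -/(mass c) m1 ltry.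
- exact: aeW.
Qed.

Lemma LNop_fixpt c x : (1 - a) * q < c -> mass c = 1%E ->
  LNop pi p a t (w c) x = w c x.
Proof.
move=> qc m1; rewrite /LNop /Lop dot_ref_fixpt //=.
apply: fixpt_fixed; rewrite gt_eqF // ?subr_gt0 ?t_lt //.
by apply: le_lt_trans qc; rewrite mulr_ge0 // ltW.
Qed.

Lemma fixed_point_fixpt v : is_ref_density pi p v -> ae_ref pi p (fun x => 0 < v x) ->
  ae_ref pi p (fun x => LNop pi p a t v x = v x) ->
  exists2 cv, dot_ref pi p v t = cv%:E &
    ae_ref pi p (fun x => (1 - a) * t x < cv /\ v x = fixpt a cv (t x)).
Proof.
move=> v_dens v_gt0 v_fix; have [mv v_ge0 _] := v_dens.
have dot_ge0 := dot_ref_ge0 p_dens t_ge0 v_ge0.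
have dot_le := dot_ref_le_sup p_dens mt t_ge0 v_dens t_le.
set cv := fine (dot_ref pi p v t).
have dotE : dot_ref pi p v t = cv%:E.
  by rewrite fineK // ge0_fin_numE // (le_lt_trans dot_le) ?ltry.
have LNopE x : LNop pi p a t v x = (a * cv + (1 - a) * v x * t x) / cv.
  by rewrite /LNop /Lop dotE.
have cv_gt0 : 0 < cv.
  rewrite lt_neqAle fine_ge0 // andbT; apply/eqP => cv0.
  apply: (ae_ref_False p_dens); move: v_gt0 v_fix; rewrite /ae_ref.
  apply: filterS2 => x vx fx px; have := vx px.
  by rewrite -(fx px) LNopE -cv0 invr0 mulr0 ltxx.
exists cv => //; move: v_gt0 v_fix; rewrite /ae_ref; apply: filterS2 => x vx fx px.
by apply: eq_fixpt => //; [exact: vx | rewrite -LNopE; exact: fx].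
Qed.

Lemma fixed_point_unique c v : (1 - a) * q < c -> mass c = 1%E ->
  is_ref_density pi p v -> ae_ref pi p (fun x => 0 < v x) ->
  ae_ref pi p (fun x => LNop pi p a t v x = v x) -> ae_ref pi p (fun x => v x = w c x).
Proof.
move=> qc m1 v_dens v_gt0 v_fix; have [mv v_ge0 _] := v_dens.
have [cv dotE] := fixed_point_fixpt v_dens v_gt0 v_fix; rewrite /ae_ref => vE.
have w_ge0 x : 0 <= w c x by rewrite fixpt_ge0 ?t_lt.
have mw := measurable_fixpt qc.
suff <- : cv = c by apply: filterS vE => x + px => /(_ px) [].
apply/eqP; rewrite eq_le; apply/andP; split; rewrite leNgt; apply/negP => ccv.
- have : (dot_ref pi p v t <= dot_ref pi p (w c) t)%E.
    apply: le_dot_ref => //; apply: filterS vE => x + px => /(_ px) [tcv ->].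
    by apply: fixpt_antitone => //; [exact: t_lt | exact: ltW].
  by rewrite dotE dot_ref_fixpt // lee_fin leNgt ccv.
- have : (dot_ref pi p (w c) t <= dot_ref pi p v t)%E.
    apply: le_dot_ref => //; apply: filterS vE => x + px => /(_ px) [tcv ->].
    by apply: fixpt_antitone => //; exact: ltW.
  by rewrite dotE dot_ref_fixpt // lee_fin leNgt ccv.
Qed.

End normalization.

Lemma fin_ratioE {R : realType} (q u : R) :
  ((if u%:E == q%:E then +oo else q%:E / (q%:E - u%:E)) =
   if u == q then +oo else (q / (q - u))%:E)%E.
Proof.
rewrite eqe; case: ifPn => // uq.
by rewrite -EFinB inver subr_eq0 eq_sym (negbTE uq) -EFinM.
Qed.

Lemma Qfun_ge0 {d} {X : measurableType d} {R : realType}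
  {d'} {Omega : measurableType d'} (P : probability Omega R) (r : X -> R)
  (eps : X -> Omega -> R) x : (0 <= Qfun P r eps x)%E.
Proof.
by rewrite mule_ge0 ?lee_fin ?expR_ge0 // integral_ge0 // => w _; rewrite lee_fin expR_ge0.
Qed.

Theorem lemma8 {d : measure_display} (X : measurableType d) (R : realType)
  (pi : {measure set X -> \bar R}) (pi_sfin : sigma_finite setT pi)
  (r : X -> R) (r_meas : measurable_fun setT r)
  {d' : measure_display} (Omega : measurableType d') (P : probability Omega R)
  (eps : X -> Omega -> R) (eps_meas : forall x, measurable_fun setT (eps x))
  (Q_meas : measurable_fun [set: X] (Qfun P r eps : X -> \bar R))
  (alpha : R) (alpha01 : 0 < alpha < 1)
  (p_ref : X -> R) (p_ref_dens : is_density pi p_ref) :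
  let Q := Qfun P r eps in
  let Qs := ess_sup pi Q in
  (0 < Qs)%E -> (Qs < +oo)%E -> (forall x, (Q x <= Qs)%E) ->
  (alpha%:E >
     (\int[pi]_x ((if Q x == Qs then +oo else Qs / (Qs - Q x)) * (p_ref x)%:E))^-1)%E ->
  let Qr := fun x => fine (Q x) in
  exists w : X -> R,
    [/\ is_ref_density pi p_ref w, in_cone pi p_ref w,
        ae_ref pi p_ref (fun x => LNop pi p_ref alpha Qr w x = w x),
        (forall v : X -> R, is_ref_density pi p_ref v -> in_cone pi p_ref v ->
           ae_ref pi p_ref (fun x => LNop pi p_ref alpha Qr v x = v x) ->
           ae_ref pi p_ref (fun x => v x = w x))
      & ((1 - alpha)%:E * Qs < dot_ref pi p_ref w Qr)%E /\
        (dot_ref pi p_ref w Qr <= Qs)%E].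
Proof.
move=> Q Qs Qs_gt0 Qs_lty Q_le HI Qr.
have QsE : Qs = (fine Qs)%:E by rewrite fineK // ge0_fin_numE // ltW.
set q := fine Qs in QsE; have q_gt0 : 0 < q by rewrite -lte_fin -QsE.
have QE x : Q x = (Qr x)%:E.
  by rewrite fineK // ge0_fin_numE ?Qfun_ge0 // (le_lt_trans (Q_le x)).
have Qr_bnd x : 0 <= Qr x <= q by rewrite -!lee_fin -QE -QsE Q_le Qfun_ge0.
have mQr : measurable_fun setT Qr := measurableT_comp (fine_measurable measurableT) Q_meas.
move: HI; under eq_integral do rewrite QE QsE fin_ratioE.
move=> /(exists_normalizing_constant p_ref_dens alpha01 q_gt0 mQr Qr_bnd).
case=> c /andP[qc cq] m1.
have [w_dens w_cone] := fixpt_ref_density alpha01 mQr Qr_bnd qc m1.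
exists (fun x => fixpt alpha c (Qr x)); split => //.
- apply: aeW => x _; exact: (LNop_fixpt p_ref_dens alpha01 q_gt0 mQr Qr_bnd x qc m1).
- move=> v v_dens [_ _ v_gt0].
  exact: (fixed_point_unique p_ref_dens alpha01 q_gt0 mQr Qr_bnd qc m1 v_dens v_gt0).
- by rewrite (dot_ref_fixpt p_ref_dens alpha01 q_gt0 mQr Qr_bnd qc m1) QsE -EFinM lte_fin lee_fin.
Qed.
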